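(* Let $\mathcal{X}$ be a set, $K\ge1$, and let classifiers be maps $\mathcal{X}\to[K]$. Let $\mathcal{B}$ assign to each $x\in\mathcal{X}$ a set $\mathcal{B}(x)\subseteq\mathcal{X}$, and for $V\subseteq\mathcal{X}$ let $\mathcal{N}(V)=\{x\in\mathcal{X}:\exists x'\in V \text{ with } \mathcal{B}(x)\cap\mathcal{B}(x')\neq\emptyset\}$. For a classifier $F$ let $\mathcal{S}_{\mathcal{B}}(F)=\{x: F(x)=F(x')\ \forall x'\in\mathcal{B}(x)\}$. Let $F$, $H$, $G_{pl}$ be classifiers. Define $\mathcal{M}(F)=\{x:F(x)\neq H(x)\}$, $\mathcal{M}(G_{pl})=\{x:G_{pl}(x)\neq H(x)\}$, $\mathcal{M}_{pl}(F)=\{x:F(x)\neq G_{pl}(x)\}$, and write $A^c$ for the complement of $A$ in $\mathcal{X}$. Let $S=\mathcal{S}_{\mathcal{B}}(F)\cap\mathcal{S}_{\mathcal{B}}(H)$ and $V=\mathcal{M}(F)\cap\mathcal{M}(G_{pl})\cap S$. Then $\mathcal{N}(V)\cap\mathcal{M}^c(F)\cap S=\emptyset$ and $\mathcal{N}(V)\cap\mathcal{M}^c(G_{pl})\cap S\subseteq\mathcal{M}_{pl}(F)$.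
   Context: $G_{pl}$ plays the role of a pseudo-labeler and $H$ of a reference classifier. *)

From mathcomp Require Import all_boot.
Set Implicit Arguments. Unset Strict Implicit. Unset Printing Implicit Defensive.

(* A classifier X -> [K], with [K] = 'I_K = {0,...,K-1}. *)
Definition classifier (X : Type) (K : nat) := X -> 'I_K.

Definition nbhd (X : Type) (B : X -> X -> Prop) (V : X -> Prop) : X -> Prop :=
  fun x => exists x', V x' /\ exists z, B x z /\ B x' z.

Definition robust (X : Type) (K : nat) (B : X -> X -> Prop) (F : classifier X K)
  : X -> Prop := fun x => forall x', B x x' -> F x = F x'.

Definition mistakes (X : Type) (K : nat) (F G : classifier X K) : X -> Prop :=
  fun x => F x <> G x.

From mathcomp Require Import all_boot.

(* Robust classifiers are constant on each B(x), so two robust points whose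
   balls meet get the same label; hence a point of S next to V inherits the
   disagreement F <> H of its neighbour in V, and where G_pl agrees with H
   that disagreement is one between F and G_pl. *)

Section Robustness.

Variables (X : Type) (K : nat) (B : X -> X -> Prop).

Lemma robust_eq_meet {F : classifier X K} {x x' z : X} :
  robust B F x -> robust B F x' -> B x z -> B x' z -> F x = F x'.
Proof. by move=> rFx rFx' Bxz Bx'z; rewrite (rFx z Bxz) (rFx' z Bx'z). Qed.

Lemma nbhd_robust_mistakes {F H : classifier X K} {V : X -> Prop} x :
  (forall y, V y -> [/\ mistakes F H y, robust B F y & robust B H y]) ->
  nbhd B V x -> robust B F x -> robust B H x -> mistakes F H x.
Proof.
move=> hV [x' [/hV[mx' rFx' rHx'] [z [Bxz Bx'z]]]] rFx rHx.
by rewrite /mistakes (robust_eq_meet rFx rFx' Bxz Bx'z)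
                     (robust_eq_meet rHx rHx' Bxz Bx'z).
Qed.

End Robustness.

Lemma mistakes_agree (X : Type) (K : nat) (F G H : classifier X K) x :
  mistakes F H x -> ~ mistakes G H x -> mistakes F G x.
Proof. by rewrite /mistakes => mFH; case: (G x =P H x) => [-> _ | nGH []]. Qed.

Theorem mainTheorem2 (X : Type) (K : nat) (hK : 1 <= K)
  (B : X -> X -> Prop) (F H Gpl : classifier X K) :
  let S := fun x => robust B F x /\ robust B H x in
  let V := fun x => mistakes F H x /\ mistakes Gpl H x /\ S x in
  (forall x, ~ (nbhd B V x /\ ~ mistakes F H x /\ S x)) /\
  (forall x, nbhd B V x /\ ~ mistakes Gpl H x /\ S x -> mistakes F Gpl x).
Proof.
move=> S V.
have hV y : V y -> [/\ mistakes F H y, robust B F y & robust B H y].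
  by case=> mFH [_ [rF rH]].
have mFH x : nbhd B V x -> S x -> mistakes F H x.
  by move=> Nx [rF rH]; exact: nbhd_robust_mistakes hV Nx rF rH.
split=> x [Nx [nm Sx]]; first exact: nm (mFH x Nx Sx).
exact: mistakes_agree (mFH x Nx Sx) nm.
Qed.
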